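(* For any frame $L$, $\mathrm{LSC}(L)=\mathrm{F}(L)\cap\overline{\mathrm{LSC}}(L)$ and $\mathrm{USC}(L)=\mathrm{F}(L)\cap\overline{\mathrm{USC}}(L)$.
   Context: $\mathbb{Q}$ is the rationals. A sublocale of $L$ is a subset closed under arbitrary meets and such that $x\to s\in S$ for $x\in L$, $s\in S$; $\mathrm{coS}(L)$ is the frame of all sublocales ordered by reverse inclusion (bottom $0=L$, top $1=\{1\}$), with lattice operations and pseudocomplements $^\ast$ taken in $\mathrm{coS}(L)$. $\mathfrak{c}(a)=\{x\mid x\ge a\}$ is the closed sublocale of $a\in L$. The frame $\mathfrak{L}(\overline{\mathbb{IR}})$ is presented by generators $(r,\textsf{---})$, $(\textsf{---},s)$ ($r,s\in\mathbb{Q}$) subject to (r1) $(r,\textsf{---})\wedge(\textsf{---},s)=0$ whenever $r\ge s$; (r3) $(r,\textsf{---})=\bigvee_{s>r}(s,\textsf{---})$; (r4) $(\textsf{---},s)=\bigvee_{r<s}(\textsf{---},r)$; adding (r2) $(r,\textsf{---})\vee(\textsf{---},s)=1$ for $r<s$ gives the frame $\mathfrak{L}(\overline{\mathbb{R}})$, so frame homomorphisms $\mathfrak{L}(\overline{\mathbb{R}})\to M$ are identified with homomorphisms $\mathfrak{L}(\overline{\mathbb{IR}})\to M$ satisfying (r2). $\overline{\mathrm{F}}(L)$ is the set of homomorphisms $f\colon\mathfrak{L}(\overline{\mathbb{IR}})\to\mathrm{coS}(L)$ with $f(r,\textsf{---})^\ast\le f(\textsf{---},s)$ and $f(\textsf{---},s)^\ast\le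 f(r,\textsf{---})$ for $r<s$, ordered by $f\le g$ iff $f(r,\textsf{---})\le g(r,\textsf{---})$ and $g(\textsf{---},s)\le f(\textsf{---},s)$; it is a complete lattice with top $\boldsymbol{+\infty}$ ($(r,\textsf{---})\mapsto1$, $(\textsf{---},s)\mapsto0$) and bottom $\boldsymbol{-\infty}$ ($(r,\textsf{---})\mapsto0$, $(\textsf{---},s)\mapsto1$). $\mathrm{F}(L)$ is the set of real-valued $f\in\overline{\mathrm{F}}(L)$, i.e. such that for all $g\in\overline{\mathrm{F}}(L)$, $f\vee g=\boldsymbol{+\infty}\Rightarrow g=\boldsymbol{+\infty}$ and $f\wedge g=\boldsymbol{-\infty}\Rightarrow g=\boldsymbol{-\infty}$. $\overline{\mathrm{LSC}}(L)$ (resp. $\overline{\mathrm{USC}}(L)$) is the set of frame homomorphisms $g\colon\mathfrak{L}(\overline{\mathbb{R}})\to\mathrm{coS}(L)$ with $g(r,\textsf{---})$ closed for all $r$ (resp. $g(\textsf{---},s)$ closed for all $s$). $\mathrm{LSC}(L)$ is the set of frame homomorphisms $f\colon\mathfrak{L}(\overline{\mathbb{R}})\to\mathrm{coS}(L)$ with (l1) $f(r,\textsf{---})$ closed for all $r$, (l2) $\bigvee_r f(r,\textsf{---})=1$, (l3) $\bigwedge_r f(r,\textsf{---})=0$; $\mathrm{USC}(L)$ is defined analogously with $f(\textsf{---},s)$: (u1) $f(\textsf{---},s)$ closed, (u2) $\bigvee_s f(\textsf{---},s)=1$, (u3) $\bigwedge_s f(\textsf{---},s)=0$. All these sets are regarded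 as subsets of $\overline{\mathrm{F}}(L)$. *)

From mathcomp Require Import all_boot all_order all_algebra.
Set Implicit Arguments. Unset Strict Implicit. Unset Printing Implicit Defensive.
Import Order.TTheory GRing.Theory Num.Theory.
Local Open Scope ring_scope.

Record frame := Frame {
  fcar :> Type;
  fle : fcar -> fcar -> Prop;
  fle_refl : forall x, fle x x;
  fle_trans : forall x y z, fle x y -> fle y z -> fle x z;
  fle_antisym : forall x y, fle x y -> fle y x -> x = y;
  fsup : (fcar -> Prop) -> fcar;
  fsup_ub : forall (A : fcar -> Prop) x, A x -> fle x (fsup A);
  fsup_least : forall (A : fcar -> Prop) y, (forall x, A x -> fle x y) -> fle (fsup A) y;
  fmeet : fcar -> fcar -> fcar;
  fmeet_lbl : forall x y, fle (fmeet x y) x;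
  fmeet_lbr : forall x y, fle (fmeet x y) y;
  fmeet_glb : forall x y z, fle z x -> fle z y -> fle z (fmeet x y);
  fdistr : forall x (A : fcar -> Prop),
     fle (fmeet x (fsup A)) (fsup (fun z => exists y, A y /\ z = fmeet x y))
}.

Definition lset (L : frame) := L -> Prop.

Definition ftop (L : frame) : L := fsup (fun _ : L => True).
Definition finf (L : frame) (A : lset L) : L := fsup (fun y => forall x, A x -> fle y x).
Definition fimp (L : frame) (x s : L) : L := fsup (fun y => fle (fmeet y x) s).

Definition sublocale (L : frame) (S : lset L) : Prop :=
  (forall A : lset L, (forall x, A x -> S x) -> S (finf A)) /\
  (forall x s : L, S s -> S (fimp x s)).

(* The coframe-of-sublocales viewed as the frame coS(L):               *)
(* sublocales ordered by reverse inclusion.                            *)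
Definition coS_le (L : frame) (S T : lset L) : Prop := forall x, T x -> S x.
Definition coS_eq (L : frame) (S T : lset L) : Prop := forall x, S x <-> T x.
Definition coS_zero (L : frame) : lset L := fun _ => True.
Definition coS_one (L : frame) : lset L := fun x => x = ftop L.
(* joins in coS(L) are intersections *)
Definition coS_join (L : frame) (S T : lset L) : lset L := fun x => S x /\ T x.
Definition coS_bigjoin (L : frame) (I : Type) (P : I -> Prop) (F : I -> lset L) : lset L :=
  fun x => forall i, P i -> F i x.
Definition coS_gen (L : frame) (A : lset L) : lset L :=
  fun x => forall T, sublocale T -> (forall y, A y -> T y) -> T x.
Definition coS_meet (L : frame) (S T : lset L) : lset L := coS_gen (fun x => S x \/ T x).
Definition coS_bigmeet (L : frame) (I : Type) (F : I -> lset L) : lset L :=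
  coS_gen (fun x => exists i, F i x).
Definition coS_pc (L : frame) (S : lset L) : lset L :=
  fun x => forall T, sublocale T -> coS_eq (coS_meet T S) (@coS_zero L) -> T x.

Definition closedsub (L : frame) (a : L) : lset L := fun x => fle a x.
Definition is_closed (L : frame) (S : lset L) : Prop := exists a : L, coS_eq S (closedsub a).

(* Frame homomorphisms L(IR-bar) -> coS(L), given (via the presentation) *)
(* by their values on generators: a r = f(r,--), b s = f(--,s).          *)
Definition hom_IRbar (L : frame) (a b : rat -> lset L) : Prop :=
  (forall r, sublocale (a r)) /\ (forall s, sublocale (b s)) /\
  (forall r s : rat, s <= r -> coS_eq (coS_meet (a r) (b s)) (@coS_zero L)) /\
  (forall r : rat, coS_eq (a r) (coS_bigjoin (fun s : rat => r < s) a)) /\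
  (forall s : rat, coS_eq (b s) (coS_bigjoin (fun r : rat => r < s) b)).

Definition hom_Rbar (L : frame) (a b : rat -> lset L) : Prop :=
  hom_IRbar a b /\
  (forall r s : rat, r < s -> coS_eq (coS_join (a r) (b s)) (@coS_one L)).

Definition Fbar (L : frame) (a b : rat -> lset L) : Prop :=
  hom_IRbar a b /\
  (forall r s : rat, r < s -> coS_le (coS_pc (a r)) (b s) /\ coS_le (coS_pc (b s)) (a r)).

Definition Fle (L : frame) (a b a' b' : rat -> lset L) : Prop :=
  (forall r, coS_le (a r) (a' r)) /\ (forall s, coS_le (b' s) (b s)).

Definition is_pinf (L : frame) (a b : rat -> lset L) : Prop :=
  (forall r, coS_eq (a r) (@coS_one L)) /\ (forall s, coS_eq (b s) (@coS_zero L)).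
Definition is_minf (L : frame) (a b : rat -> lset L) : Prop :=
  (forall r, coS_eq (a r) (@coS_zero L)) /\ (forall s, coS_eq (b s) (@coS_one L)).

(* "f \/ g = +oo" in the complete lattice F-bar(L): the only upper bound of f,g is +oo *)
Definition Fjoin_is_pinf (L : frame) (a b a' b' : rat -> lset L) : Prop :=
  forall c d, Fbar c d -> Fle a b c d -> Fle a' b' c d -> is_pinf c d.
(* "f /\ g = -oo": the only lower bound of f,g is -oo *)
Definition Fmeet_is_minf (L : frame) (a b a' b' : rat -> lset L) : Prop :=
  forall c d, Fbar c d -> Fle c d a b -> Fle c d a' b' -> is_minf c d.

Definition Freal (L : frame) (a b : rat -> lset L) : Prop :=
  Fbar a b /\
  forall a' b', Fbar a' b' ->
    (Fjoin_is_pinf a b a' b' -> is_pinf a' b') /\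
    (Fmeet_is_minf a b a' b' -> is_minf a' b').

Definition LSCbar (L : frame) (a b : rat -> lset L) : Prop :=
  hom_Rbar a b /\ (forall r, is_closed (a r)).
Definition USCbar (L : frame) (a b : rat -> lset L) : Prop :=
  hom_Rbar a b /\ (forall s, is_closed (b s)).

Definition LSC (L : frame) (a b : rat -> lset L) : Prop :=
  hom_Rbar a b /\ (forall r, is_closed (a r)) /\
  coS_eq (coS_bigjoin (fun _ : rat => True) a) (@coS_one L) /\
  coS_eq (coS_bigmeet a) (@coS_zero L).
Definition USC (L : frame) (a b : rat -> lset L) : Prop :=
  hom_Rbar a b /\ (forall s, is_closed (b s)) /\
  coS_eq (coS_bigjoin (fun _ : rat => True) b) (@coS_one L) /\
  coS_eq (coS_bigmeet b) (@coS_zero L).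

(* coS(L) is a frame: an element of the sublocale generated by X and Y is a
   meet x /\ y with x in X and y in Y, which gives the infinite distributive
   law; closed sublocales are complemented (by open ones).
   Let f = (a, b) be lower semicontinuous with /\_r a r = 0 and \/_r a r = 1,
   and g = (a', b') in F-bar(L).  If f \/ g = +oo then a r \/ a' r = 1, so
   b' s lies below every closed a t, hence below /\_t a t = 0, and g = +oo.
   If f /\ g = -oo then b s \/ b' s = 1, so every a t lies below b' s, hence
   1 = \/_t a t <= b' s, and g = -oo.
   Conversely, if f is real-valued with closed a r, testing f against the
   constant element of F-bar(L) with values P^* and P^** forces P^* = 0 for
   P = \/_r a r, so P = 1 as P is closed, and P^* = 1 for P = /\_r a r, so
   P = 0.
   The upper semicontinuous case is the lower one for -f. *)

From mathcomp Require Import all_boot all_order all_algebra.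
From Stdlib Require Import Setoid FunctionalExtensionality.
Import Order.TTheory GRing.Theory Num.Theory.

Section SemicontinuousSublocaleMaps.
Local Open Scope ring_scope.
Variable L : frame.
Implicit Types (u x y z w s : L) (A : lset L).

Lemma fle_meet x y z : fle z (fmeet x y) <-> fle z x /\ fle z y.
Proof.
split=> [zxy | [zx zy]]; last exact: fmeet_glb.
by split; apply: fle_trans zxy _; [apply: fmeet_lbl | apply: fmeet_lbr].
Qed.

Lemma fle_ext x y : (forall z, fle z x <-> fle z y) -> x = y.
Proof. by move=> xy; apply: fle_antisym; [apply/xy | apply/xy]; apply: fle_refl. Qed.

Lemma fmeetC x y : fmeet x y = fmeet y x.
Proof. by apply: fle_ext => z; rewrite !fle_meet; tauto. Qed.

Lemma fle_top x : fle x (ftop L).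
Proof. exact: fsup_ub. Qed.

Lemma finf_lb {A x} : A x -> fle (finf A) x.
Proof. by move=> Ax; apply: fsup_least => y; apply. Qed.

Lemma finf_glb A y : (forall x, A x -> fle y x) -> fle y (finf A).
Proof. exact: fsup_ub. Qed.

Lemma finf0 : finf (fun _ : L => False) = ftop L.
Proof. by apply: fle_antisym; [apply: fle_top | apply: finf_glb]. Qed.

Lemma finf2 x y : finf (fun w => w = x \/ w = y) = fmeet x y.
Proof.
apply: fle_antisym; first by apply: fmeet_glb; apply: finf_lb; [left | right].
by apply: finf_glb => w [->|->]; [apply: fmeet_lbl | apply: fmeet_lbr].
Qed.

Lemma fimpP w x s : fle w (fimp x s) <-> fle (fmeet w x) s.
Proof.
split=> [w_xs | wx_s]; last exact: fsup_ub.
have wx : fle (fmeet w x) (fmeet x (fimp x s)).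
  rewrite fle_meet; split; first exact: fmeet_lbr.
  exact: fle_trans (fmeet_lbl _ _) w_xs.
apply: fle_trans wx _; apply: fle_trans (fdistr _ _) _.
by apply: fsup_least => _ [y [ys ->]]; rewrite fmeetC.
Qed.

Lemma fimp_meet w x y : fimp w (fmeet x y) = fmeet (fimp w x) (fimp w y).
Proof. by apply: fle_ext => z; rewrite fle_meet !fimpP fle_meet. Qed.

Implicit Types (S T U X Y : lset L).

Lemma sublocale_top {S} : sublocale S -> S (ftop L).
Proof. by case=> inf _; rewrite -finf0; apply: inf. Qed.

Lemma sublocale_fmeet {S x y} : sublocale S -> S x -> S y -> S (fmeet x y).
Proof. by case=> inf _ Sx Sy; rewrite -finf2; apply: inf => w [->|->]. Qed.

Lemma sublocale_gen A : sublocale (coS_gen A).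
Proof.
split=> [B BA | x s As] T sT AT; first by apply: (proj1 sT) => x /BA; apply.
by apply: (proj2 sT); apply: As.
Qed.

Lemma sub_coS_gen {A x} : A x -> coS_gen A x.
Proof. by move=> Ax T _; apply. Qed.

Lemma coS_genS {A B} : (forall x, A x -> B x) -> forall x, coS_gen A x -> coS_gen B x.
Proof. by move=> AB x Ax T sT BT; apply: Ax => // y /AB /BT. Qed.

Lemma coS_gen_min {A T} : sublocale T -> (forall x, A x -> T x) ->
  forall x, coS_gen A x -> T x.
Proof. by move=> sT AT x; apply. Qed.

Lemma sublocale_zero : sublocale (@coS_zero L).
Proof. by []. Qed.

Lemma sublocale_one : sublocale (@coS_one L).
Proof.
split=> [A A1 | x s ->]; apply: fle_antisym; try exact: fle_top.
  by apply: finf_glb => x /A1 ->; apply: fle_refl.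
by apply/fimpP/fle_top.
Qed.

Lemma sublocale_join S T : sublocale S -> sublocale T -> sublocale (coS_join S T).
Proof.
move=> [infS impS] [infT impT]; split=> [A AST | x s [Ss Ts]].
  by split; [apply: infS | apply: infT] => x /AST [].
by split; [apply: impS | apply: impT].
Qed.

Lemma sublocale_bigjoin I (P : I -> Prop) (F : I -> lset L) :
  (forall i, P i -> sublocale (F i)) -> sublocale (coS_bigjoin P F).
Proof.
move=> sF; split=> [A AF i Pi | x s Fs i Pi].
  by apply: (proj1 (sF i Pi)) => x /AF; apply.
exact: (proj2 (sF i Pi) _ _ (Fs i Pi)).
Qed.

Lemma sublocale_pc S : sublocale (coS_pc S).
Proof.
split=> [A Apc T sT TS | x s spc T sT TS]; first by apply: (proj1 sT) => x /Apc; apply.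
exact: (proj2 sT) (spc T sT TS).
Qed.

Lemma sublocale_meet S T : sublocale (coS_meet S T).
Proof. exact: sublocale_gen. Qed.

Lemma coS_le_refl S : coS_le S S.
Proof. by []. Qed.

Lemma coS_le_trans {T S U} : coS_le S T -> coS_le T U -> coS_le S U.
Proof. by move=> ST TU x /TU /ST. Qed.

Lemma coS_le0 S : coS_le (@coS_zero L) S.
Proof. by []. Qed.

Lemma coS_le1 {S} : sublocale S -> coS_le S (@coS_one L).
Proof. by move=> sS x ->; apply: sublocale_top. Qed.

Lemma coS_eq0 {S} : coS_eq S (@coS_zero L) <-> coS_le S (@coS_zero L).
Proof. by split=> S0 x; [move/S0 | split=> // _; apply: S0]. Qed.

Lemma coS_eq1 {S} : sublocale S -> coS_eq S (@coS_one L) <-> coS_le (@coS_one L) S.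
Proof.
move=> sS; split=> S1 x; first by move/S1.
by split=> [/S1 // | ->]; apply: sublocale_top.
Qed.

Lemma coS_join_ubl S T : coS_le S (coS_join S T).
Proof. by move=> x []. Qed.

Lemma coS_join_ubr S T : coS_le T (coS_join S T).
Proof. by move=> x []. Qed.

Lemma coS_join_lub {S T U} : coS_le S U -> coS_le T U -> coS_le (coS_join S T) U.
Proof. by move=> SU TU x Ux; split; [apply: SU | apply: TU]. Qed.

Lemma coS_joinS {S S' T T'} :
  coS_le S S' -> coS_le T T' -> coS_le (coS_join S T) (coS_join S' T').
Proof. by move=> SS' TT' x [/SS' ? /TT' ?]. Qed.

Lemma coS_joinC S T : coS_le (coS_join S T) (coS_join T S).
Proof. by move=> x []. Qed.

Lemma coS_bigjoin_ub {I} {P : I -> Prop} (F : I -> lset L) {i} :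
  P i -> coS_le (F i) (coS_bigjoin P F).
Proof. by move=> Pi x; apply. Qed.

Lemma coS_bigjoin_lub {I} {P : I -> Prop} {F : I -> lset L} {U} :
  (forall i, P i -> coS_le (F i) U) -> coS_le (coS_bigjoin P F) U.
Proof. by move=> FU x Ux i Pi; apply: FU. Qed.

Lemma coS_meet_lbl S T : coS_le (coS_meet S T) S.
Proof. by move=> x Sx; apply: sub_coS_gen; left. Qed.

Lemma coS_meet_lbr S T : coS_le (coS_meet S T) T.
Proof. by move=> x Tx; apply: sub_coS_gen; right. Qed.

Lemma coS_meet_glb {S T U} :
  sublocale U -> coS_le U S -> coS_le U T -> coS_le U (coS_meet S T).
Proof. by move=> sU US UT; apply: coS_gen_min => // x [/US | /UT]. Qed.

Lemma coS_meetS {S S' T T'} :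
  coS_le S S' -> coS_le T T' -> coS_le (coS_meet S T) (coS_meet S' T').
Proof. by move=> SS' TT'; apply: coS_genS => x [/SS' | /TT']; [left | right]. Qed.

Lemma coS_meetC S T : coS_le (coS_meet S T) (coS_meet T S).
Proof. by apply: coS_genS => x [|]; [right | left]. Qed.

Lemma coS_bigmeet_lb I (F : I -> lset L) i : coS_le (coS_bigmeet F) (F i).
Proof. by move=> x Fx; apply: sub_coS_gen; exists i. Qed.

Lemma coS_bigmeet_glb {I} {F : I -> lset L} {U} :
  sublocale U -> (forall i, coS_le U (F i)) -> coS_le U (coS_bigmeet F).
Proof. by move=> sU UF; apply: coS_gen_min => // x [i /UF]. Qed.

Lemma sublocale_meets {X Y} : sublocale X -> sublocale Y ->
  sublocale (fun z => exists x y, X x /\ Y y /\ z = fmeet x y).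
Proof.
move=> [infX impX] [infY impY]; split=> [A AXY | w _ [x [y [Xx [Yy ->]]]]]; last first.
  exists (fimp w x), (fimp w y); rewrite fimp_meet.
  by split; [apply: impX | split; [apply: impY |]].
pose AX := fun x => X x /\ exists y, Y y /\ A (fmeet x y).
pose AY := fun y => Y y /\ exists x, X x /\ A (fmeet x y).
exists (finf AX), (finf AY); split; first by apply: infX => x [].
split; first by apply: infY => y [].
apply: fle_antisym.
  rewrite fle_meet; split; apply: finf_glb.
  - by move=> w [_ [y [_ Awy]]]; apply: fle_trans (finf_lb Awy) (fmeet_lbl _ _).
  - by move=> w [_ [x [_ Axw]]]; apply: fle_trans (finf_lb Axw) (fmeet_lbr _ _).
apply: finf_glb => a Aa; have [x [y [Xx [Yy Ea]]]] := AXY a Aa.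
rewrite Ea in Aa *; rewrite fle_meet; split.
- by apply: fle_trans (fmeet_lbl _ _) (finf_lb _); split => //; exists y.
- by apply: fle_trans (fmeet_lbr _ _) (finf_lb _); split => //; exists x.
Qed.

Lemma coS_meet_fmeet {X Y z} : sublocale X -> sublocale Y ->
  coS_meet X Y z -> exists x y, X x /\ Y y /\ z = fmeet x y.
Proof.
move=> sX sY; apply: (coS_gen_min (sublocale_meets sX sY)).
move=> x [Xx | Yx].
  exists x, (ftop L); do !split=> //; first exact: sublocale_top.
  by apply: fle_ext => w; rewrite fle_meet; split=> [? | []//]; split=> //; apply: fle_top.
exists (ftop L), x; do !split=> //; first exact: sublocale_top.
by apply: fle_ext => w; rewrite fle_meet; split=> [? | []//]; split=> //; apply: fle_top.
Qed.

(* The frame law of coS(L).  Writing [z] as [x0 /\ (x0 -> z)] with [x0] the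
   least element of [X] above [z] makes the second factor independent of
   [i]. *)
Lemma coS_meet_bigjoin {X I} {P : I -> Prop} {F : I -> lset L} :
  sublocale X -> (forall i, P i -> sublocale (F i)) ->
  coS_le (coS_meet X (coS_bigjoin P F)) (coS_bigjoin P (fun i => coS_meet X (F i))).
Proof.
move=> sX sF z zXF.
pose x0 := finf (fun x => X x /\ fle z x).
have X_x0 : X x0 by apply: (proj1 sX) => x [].
have z_x0 : fle z x0 by apply: finf_glb => x [].
have -> : z = fmeet x0 (fimp x0 z).
  apply: fle_antisym; first by apply: fmeet_glb => //; apply/fimpP/fmeet_lbl.
  by rewrite fmeetC; apply/fimpP/fle_refl.
apply: (sublocale_fmeet (sublocale_gen _)); first by apply: sub_coS_gen; left.
apply: sub_coS_gen; right=> i Pi.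
have [x [y [Xx [Fy Ez]]]] := coS_meet_fmeet sX (sF i Pi) (zXF i Pi).
have x0_x : fle x0 x by apply: finf_lb; rewrite Ez; split=> //; apply: fmeet_lbl.
have -> : fimp x0 z = fimp x0 y.
  apply: fle_ext => w; rewrite !fimpP Ez fle_meet.
  by split=> [[] // | wy]; split=> //; apply: fle_trans (fmeet_lbr _ _) x0_x.
exact: (proj2 (sF i Pi)).
Qed.

Lemma coS_meet_join {X Y Z} : sublocale X -> sublocale Y -> sublocale Z ->
  coS_le (coS_meet X (coS_join Y Z)) (coS_join (coS_meet X Y) (coS_meet X Z)).
Proof.
move=> sX sY sZ z [zXY zXZ].
pose F (b : bool) := if b then Y else Z.
have sF : forall b, True -> sublocale (F b) by case.
have zXF : coS_bigjoin (fun _ => True) (fun b => coS_meet X (F b)) z by case.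
move: (coS_meet_bigjoin sX sF z zXF); apply: coS_genS => w [Xw | YZw]; [by left | right].
by split; [apply: (YZw true) | apply: (YZw false)].
Qed.

Lemma coS_pc_max {S T} :
  sublocale T -> coS_le (coS_meet T S) (@coS_zero L) -> coS_le T (coS_pc S).
Proof. by move=> sT TS0 x; apply=> //; apply/coS_eq0. Qed.

Lemma coS_meet_pc {S} : sublocale S -> coS_le (coS_meet S (coS_pc S)) (@coS_zero L).
Proof.
move=> sS z _.
pose P T := sublocale T /\ coS_eq (coS_meet T S) (@coS_zero L).
have zSP : coS_bigjoin P (fun T => coS_meet S T) z.
  by move=> T [_ TS0]; apply: coS_meetC; apply/TS0.
move: (coS_meet_bigjoin sS (fun T (PT : P T) => proj1 PT) z zSP).
by apply: coS_genS => w [Sw | Pw]; [left | right => T sT TS0; apply: Pw].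
Qed.

Lemma coS_pc_meet {S} : sublocale S -> coS_le (coS_meet (coS_pc S) S) (@coS_zero L).
Proof. by move=> sS; apply: coS_le_trans (coS_meetC _ _) (coS_meet_pc sS). Qed.

Lemma coS_pc_anti {S T} : sublocale T -> coS_le S T -> coS_le (coS_pc T) (coS_pc S).
Proof.
move=> sT ST; apply: coS_pc_max; first exact: sublocale_pc.
exact: coS_le_trans (coS_meetS (coS_le_refl _) ST) (coS_pc_meet sT).
Qed.

Lemma coS_le_pcpc {S} : sublocale S -> coS_le S (coS_pc (coS_pc S)).
Proof. by move=> sS; apply: coS_pc_max => //; apply: coS_meet_pc. Qed.

Lemma coS_pc0 : coS_le (@coS_one L) (coS_pc (@coS_zero L)).
Proof.
move=> x; apply; first exact: sublocale_one.
by apply/coS_eq0 => y _; apply: sub_coS_gen; right.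
Qed.

Lemma coS_le_split {U X Y} : sublocale U -> sublocale X -> sublocale Y ->
  coS_le (@coS_one L) (coS_join X Y) ->
  coS_le U (coS_join (coS_meet U X) (coS_meet U Y)).
Proof.
move=> sU sX sY XY1; apply: coS_le_trans (coS_meet_join sU sX sY).
by apply: coS_meet_glb => //; apply: coS_le_trans (coS_le1 sU) XY1.
Qed.

Lemma coS_pc_le_complement {X Y} : sublocale X -> sublocale Y ->
  coS_le (@coS_one L) (coS_join X Y) -> coS_le (coS_pc X) Y.
Proof.
move=> sX sY XY1; apply: coS_le_trans (coS_le_split (sublocale_pc X) sX sY XY1) _.
apply: coS_join_lub; last exact: coS_meet_lbr.
exact: coS_le_trans (coS_pc_meet sX) (coS_le0 _).
Qed.

Definition opensub (u : L) : lset L := fun z => z = fimp u z.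

Lemma sublocale_open u : sublocale (opensub u).
Proof.
split=> [A Ao | w s os].
  apply: fle_antisym; first by apply/fimpP/fmeet_lbl.
  apply: finf_glb => x Ax; rewrite (Ao x Ax); apply/fimpP.
  exact: fle_trans (proj1 (fimpP _ _ _) (fle_refl _)) (finf_lb Ax).
have AC z : fmeet (fmeet z w) u = fmeet (fmeet z u) w.
  by apply: fle_ext => y; rewrite !fle_meet; tauto.
by apply: fle_ext => z; rewrite !fimpP {1}os fimpP AC.
Qed.

Lemma sublocale_closed u : sublocale (closedsub u).
Proof.
split=> [A Aa | x s as_]; first exact: finf_glb.
by apply/fimpP; apply: fle_trans (fmeet_lbl _ _) as_.
Qed.

Lemma sublocale_is_closed {S} : is_closed S -> sublocale S.
Proof.
case=> u Sa; have [infa impa] := sublocale_closed u.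
split=> [A AS | x s Ss]; apply/Sa; first by apply: infa => x /AS /Sa.
by apply: impa; apply/Sa.
Qed.

(* Every [z] splits as [(u \/ z) /\ (u -> z)]. *)
Lemma closed_open_meet u : coS_le (coS_meet (closedsub u) (opensub u)) (@coS_zero L).
Proof.
move=> z _; pose az := fsup (fun w => w = u \/ w = z).
have -> : z = fmeet az (fimp u z).
  apply: fle_antisym.
    by apply: fmeet_glb; [apply: fsup_ub; right | apply/fimpP/fmeet_lbl].
  rewrite fmeetC; apply: fle_trans (fdistr _ _) _.
  apply: fsup_least => _ [y [[->|->] ->]]; last exact: fmeet_lbr.
  by apply/fimpP; apply: fle_refl.
apply: (sublocale_fmeet (sublocale_gen _)); apply: sub_coS_gen.
  by left; apply: fsup_ub; left.
right; apply: fle_ext => w; rewrite !fimpP.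
split=> [wa_z | waa_z]; first exact: fle_trans (fmeet_lbl _ _) wa_z.
by apply: fle_trans waa_z; apply: fmeet_glb; [apply: fle_refl | apply: fmeet_lbr].
Qed.

Lemma closed_open_join u : coS_le (@coS_one L) (coS_join (closedsub u) (opensub u)).
Proof.
move=> z [az ->]; apply: fle_antisym; first exact: fle_top.
by apply/fimpP; apply: fle_trans (fmeet_lbr _ _) az.
Qed.

Lemma is_closed_bigjoin {I} {P : I -> Prop} {F : I -> lset L} :
  (forall i, P i -> is_closed (F i)) -> is_closed (coS_bigjoin P F).
Proof.
move=> cF; pose U u := exists2 i, P i & coS_eq (F i) (closedsub u).
exists (fsup U) => z; split=> [Fz | Uz i Pi].
  by apply: fsup_least => u [i Pi /(_ z) Fiu]; apply/Fiu/Fz.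
have [u Fiu] := cF i Pi; apply/Fiu.
by apply: fle_trans Uz; apply: fsup_ub; exists i.
Qed.

Lemma closed_join_pc {S} : is_closed S -> coS_le (@coS_one L) (coS_join S (coS_pc S)).
Proof.
case=> u Sa; apply: coS_le_trans (closed_open_join u) _.
apply: coS_joinS => [x /Sa // |].
apply: coS_pc_max; first exact: sublocale_open.
apply: coS_le_trans (coS_meetC _ _) _; apply: coS_le_trans _ (closed_open_meet u).
by apply: coS_meetS => // x /Sa.
Qed.

Lemma closed_pcpc {S} : is_closed S -> coS_le (coS_pc (coS_pc S)) S.
Proof.
move=> cS; apply: coS_pc_le_complement; [exact: sublocale_pc | exact: sublocale_is_closed |].
exact: coS_le_trans (closed_join_pc cS) (coS_joinC _ _).
Qed.

Implicit Types (a b c d : rat -> lset L) (r t : rat).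

Lemma hom_sub_a {a b} : hom_IRbar a b -> forall r, sublocale (a r).
Proof. by case. Qed.

Lemma hom_sub_b {a b} : hom_IRbar a b -> forall r, sublocale (b r).
Proof. by case=> _ []. Qed.

Ltac sublocale_of_hom := match goal with
  | H : hom_IRbar ?a _ |- sublocale (?a _) => exact: (hom_sub_a H)
  | H : hom_IRbar _ ?b |- sublocale (?b _) => exact: (hom_sub_b H)
  end.

#[local] Hint Extern 1 (sublocale _) => sublocale_of_hom : core.
#[local] Hint Resolve sublocale_meet sublocale_pc sublocale_join sublocale_zero
  sublocale_one sublocale_is_closed coS_le_refl : core.

Lemma hom_meet0 {a b r t} : hom_IRbar a b -> t <= r ->
  coS_le (coS_meet (a r) (b t)) (@coS_zero L).
Proof. by case=> _ [_ [r1 _]] tr; apply/coS_eq0/r1. Qed.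

Lemma hom_a_bigjoin {a b} r : hom_IRbar a b ->
  coS_le (a r) (coS_bigjoin (fun t => r < t) a).
Proof. by case=> _ [_ [_ [r3 _]]] x /(r3 r x). Qed.

Lemma hom_b_bigjoin {a b} r : hom_IRbar a b ->
  coS_le (b r) (coS_bigjoin (fun t => t < r) b).
Proof. by case=> _ [_ [_ [_ r4]]] x /(r4 r x). Qed.

Lemma hom_a_anti {a b r t} : hom_IRbar a b -> r <= t -> coS_le (a t) (a r).
Proof.
by case=> _ [_ [_ [r3 _]]]; rewrite le_eqVlt => /orP[/eqP-> // | rt] x /(r3 r x); apply.
Qed.

Lemma hom_b_mono {a b r t} : hom_IRbar a b -> r <= t -> coS_le (b r) (b t).
Proof.
by case=> _ [_ [_ [_ r4]]]; rewrite le_eqVlt => /orP[/eqP-> // | rt] x /(r4 t x); apply.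
Qed.

Lemma hom_Rbar_Fbar {a b} : hom_Rbar a b -> Fbar a b.
Proof.
case=> hab r2; split=> // r t rt; split; apply: coS_pc_le_complement; auto.
  by move=> x /(r2 r t rt).
by move=> x [bx ax]; apply/(r2 r t rt).
Qed.

Lemma Fbar_pc_const {X} : sublocale X ->
  Fbar (fun _ => coS_pc X) (fun _ => coS_pc (coS_pc X)).
Proof.
move=> sX; split; last first.
  by move=> r t _; split=> //; apply: coS_pc_anti => //; apply: coS_le_pcpc.
split=> //; split=> //; split; [|split].
- by move=> r t _; apply/coS_eq0; apply: coS_meet_pc.
- by move=> r x; split=> [pcx t _ // | /(_ (r + 1))]; apply; rewrite ltrDl.
- by move=> t x; split=> [pcx r _ // | /(_ (t - 1))]; apply; rewrite gtrDl oppr_lt0.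
Qed.

(* [(a, b) |-> (oppf b, oppf a)] is [f |-> -f]: it reverses the order of
   F-bar(L) and exchanges LSC with USC. *)
Definition oppf (f : rat -> lset L) : rat -> lset L := fun r => f (- r).

Lemma oppfK f : oppf (oppf f) = f.
Proof. by apply: functional_extensionality => r; rewrite /oppf opprK. Qed.

Lemma hom_IRbar_opp {a b} : hom_IRbar a b -> hom_IRbar (oppf b) (oppf a).
Proof.
case=> sa [sb [r1 [r3 r4]]]; split=> [r|]; first exact: sb.
split=> [r|]; first exact: sa.
split; [|split].
- move=> r t tr; apply/coS_eq0; apply: coS_le_trans (coS_meetC _ _) _.
  by apply/coS_eq0/r1; rewrite lerN2.
- move=> r x; split=> [/(r4 (- r) x) bx t rt | bx]; first by apply: bx; rewrite ltrN2.
  by apply/(r4 (- r) x) => t tr; rewrite -[t]opprK; apply: bx; rewrite ltrNr.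
- move=> r x; split=> [/(r3 (- r) x) ax t tr | ax]; first by apply: ax; rewrite ltrN2.
  by apply/(r3 (- r) x) => t rt; rewrite -[t]opprK; apply: ax; rewrite ltrNl.
Qed.

Lemma hom_Rbar_opp {a b} : hom_Rbar a b -> hom_Rbar (oppf b) (oppf a).
Proof.
case=> hab r2; split; first exact: hom_IRbar_opp.
move=> r t rt x; rewrite -(r2 (- t) (- r)) ?ltrN2 //.
by split=> [[]|[]].
Qed.

Lemma Fbar_opp {a b} : Fbar a b -> Fbar (oppf b) (oppf a).
Proof.
case=> hab pc_ab; split; first exact: hom_IRbar_opp.
by move=> r t rt; have [] := pc_ab (- t) (- r); rewrite ?ltrN2.
Qed.

Lemma Fbar_oppE a b : Fbar (oppf b) (oppf a) <-> Fbar a b.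
Proof. by split=> [/Fbar_opp | ]; rewrite ?oppfK //; apply: Fbar_opp. Qed.

Lemma Fle_opp {a b c d} : Fle a b c d -> Fle (oppf d) (oppf c) (oppf b) (oppf a).
Proof. by case=> ac db; split=> r; [apply: db | apply: ac]. Qed.

Lemma is_pinf_opp {a b} : is_pinf a b -> is_minf (oppf b) (oppf a).
Proof. by case=> a1 b0; split=> r; [apply: b0 | apply: a1]. Qed.

Lemma is_minf_opp {a b} : is_minf a b -> is_pinf (oppf b) (oppf a).
Proof. by case=> a0 b1; split=> r; [apply: b1 | apply: a0]. Qed.

Lemma Freal_opp {a b} : Freal a b -> Freal (oppf b) (oppf a).
Proof.
case=> Fab real_ab; split; first exact: Fbar_opp.
move=> a' b' Fab'; have [join_ab meet_ab] := real_ab _ _ (Fbar_opp Fab').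
split=> [join_pinf | meet_minf].
- rewrite -(oppfK a') -(oppfK b'); apply: is_minf_opp; apply: meet_ab.
  move=> c d Fcd cab cab'; rewrite -(oppfK c) -(oppfK d); apply: is_pinf_opp.
  apply: join_pinf (Fbar_opp Fcd) (Fle_opp cab) _.
  by have := Fle_opp cab'; rewrite !oppfK.
- rewrite -(oppfK a') -(oppfK b'); apply: is_pinf_opp; apply: join_ab.
  move=> c d Fcd abc ab'c; rewrite -(oppfK c) -(oppfK d); apply: is_minf_opp.
  apply: meet_minf (Fbar_opp Fcd) (Fle_opp abc) _.
  by have := Fle_opp ab'c; rewrite !oppfK.
Qed.

Lemma Freal_oppE a b : Freal (oppf b) (oppf a) <-> Freal a b.
Proof. by split=> [/Freal_opp | ]; rewrite ?oppfK //; apply: Freal_opp. Qed.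

Lemma coS_bigjoin_opp f : coS_eq (coS_bigjoin (fun _ => True) (oppf f))
  (coS_bigjoin (fun _ => True) f).
Proof. by move=> x; split=> fx r _; [rewrite -[r]opprK |]; apply: fx. Qed.

Lemma coS_bigmeet_opp f : coS_eq (coS_bigmeet (oppf f)) (coS_bigmeet f).
Proof.
move=> x; split; apply: coS_genS => y [r fy]; exists (- r) => //.
by rewrite /oppf opprK.
Qed.

Lemma hom_Rbar_oppE a b : hom_Rbar (oppf b) (oppf a) <-> hom_Rbar a b.
Proof. by split=> [/hom_Rbar_opp | ]; rewrite ?oppfK //; apply: hom_Rbar_opp. Qed.

Lemma USC_LSC_opp a b : USC a b <-> LSC (oppf b) (oppf a).
Proof.
rewrite /USC /LSC hom_Rbar_oppE.
split=> -[hab [bc [b1 b0]]]; split=> //; split.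
- by move=> r; apply: bc.
- split=> x; [rewrite (coS_bigjoin_opp b x) | rewrite (coS_bigmeet_opp b x)].
    exact: b1.
  exact: b0.
- by move=> r; rewrite -[r]opprK; apply: bc.
- split=> x; [rewrite -(coS_bigjoin_opp b x) | rewrite -(coS_bigmeet_opp b x)].
    exact: b1.
  exact: b0.
Qed.

Lemma USCbar_LSCbar_opp a b : USCbar a b <-> LSCbar (oppf b) (oppf a).
Proof.
rewrite /USCbar /LSCbar hom_Rbar_oppE.
split=> -[hab bc]; split=> // r; first exact: bc.
by rewrite -[r]opprK; apply: bc.
Qed.

Lemma coS_meet_bigjoin_mono {P : rat -> Prop} {F G : rat -> lset L} :
  (forall t, sublocale (F t)) -> (forall t, sublocale (G t)) ->
  (forall t u : rat, t <= u -> coS_le (F t) (F u)) ->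
  (forall t u : rat, t <= u -> coS_le (G t) (G u)) ->
  coS_le (coS_meet (coS_bigjoin P F) (coS_bigjoin P G))
         (coS_bigjoin P (fun t => coS_meet (F t) (G t))).
Proof.
move=> sF sG monoF monoG.
have sFP : sublocale (coS_bigjoin P F) by apply: sublocale_bigjoin.
apply: coS_le_trans (coS_meet_bigjoin (P := P) sFP (fun t _ => sG t)) _.
apply: coS_bigjoin_lub => u Pu; apply: coS_le_trans (coS_meetC _ _) _.
apply: coS_le_trans (coS_meet_bigjoin (P := P) (sG u) (fun t _ => sF t)) _.
apply: coS_bigjoin_lub => t Pt; apply: coS_le_trans (coS_meetC _ _) _.
have [tu | ut] := leP t u.
  apply: coS_le_trans (coS_meetS (monoF t u tu) (coS_le_refl _)) _.
  exact (coS_bigjoin_ub (fun m => coS_meet (F m) (G m)) Pu).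
apply: coS_le_trans (coS_meetS (coS_le_refl _) (monoG u t (ltW ut))) _.
exact (coS_bigjoin_ub (fun m => coS_meet (F m) (G m)) Pt).
Qed.

Lemma hom_IRbar_join_meet {a b a' b'} : hom_IRbar a b -> hom_IRbar a' b' ->
  hom_IRbar (fun r => coS_join (a r) (a' r)) (fun r => coS_meet (b r) (b' r)).
Proof.
move=> hab hab'; split=> [r|]; first by auto.
split=> [r|]; first by auto.
split; [|split].
- move=> r t tr; apply/coS_eq0.
  apply: coS_le_trans (coS_meetC _ _) _; apply: coS_le_trans (coS_meet_join _ _ _) _; auto.
  apply: coS_join_lub; apply: coS_le_trans (coS_meetC _ _) _.
    exact: coS_le_trans (coS_meetS (coS_le_refl _) (coS_meet_lbl _ _)) (hom_meet0 hab tr).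
  exact: coS_le_trans (coS_meetS (coS_le_refl _) (coS_meet_lbr _ _)) (hom_meet0 hab' tr).
- move=> r x; split=> [[ax a'x] t rt | aa'x].
    by split; [apply: (hom_a_anti hab (ltW rt)) | apply: (hom_a_anti hab' (ltW rt))].
  by split; [apply: (hom_a_bigjoin r hab) | apply: (hom_a_bigjoin r hab')] => t /aa'x [].
- move=> r x; split=> [bb'x t tr | bb'x].
    exact: coS_meetS (hom_b_mono hab (ltW tr)) (hom_b_mono hab' (ltW tr)) x bb'x.
  apply: (coS_meetS (hom_b_bigjoin r hab) (hom_b_bigjoin r hab')).
  apply: coS_meet_bigjoin_mono bb'x; auto=> t u.
    exact: hom_b_mono hab.
  exact: hom_b_mono hab'.
Qed.

Lemma coS_meet_pc_meet S T : coS_le (coS_meet (coS_pc (coS_meet S T)) S) (coS_pc T).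
Proof.
apply: coS_pc_max; first exact: sublocale_meet.
apply: coS_le_trans (coS_pc_meet (sublocale_meet S T)).
apply: coS_meet_glb; first exact: sublocale_meet.
  exact: coS_le_trans (coS_meet_lbl _ _) (coS_meet_lbl _ _).
apply: coS_meet_glb; first exact: sublocale_meet.
  exact: coS_le_trans (coS_meet_lbl _ _) (coS_meet_lbr _ _).
exact: coS_meet_lbr.
Qed.

Lemma Fbar_join {a b a' b'} : hom_Rbar a b -> Fbar a' b' ->
  Fbar (fun r => coS_join (a r) (a' r)) (fun r => coS_meet (b r) (b' r)).
Proof.
move=> Rab [hab' pc_ab']; have [hab pc_ab] := hom_Rbar_Fbar Rab.
split; first exact: hom_IRbar_join_meet.
move=> r s rs; split.
  apply: coS_meet_glb; auto.
    apply: coS_le_trans (pc_ab r s rs).1.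
    by apply: coS_pc_anti (coS_join_ubl _ _); auto.
  apply: coS_le_trans (pc_ab' r s rs).1.
  by apply: coS_pc_anti (coS_join_ubr _ _); auto.
have [rt ts] := midf_lt rs.
have one_ab : coS_le (@coS_one L) (coS_join (a ((r + s) / 2)) (b s)).
  by move=> x /(Rab.2 _ s ts).
apply: coS_le_trans (coS_le_split _ _ _ one_ab) _; auto.
apply: coS_joinS.
  exact: coS_le_trans (coS_meet_lbr _ _) (hom_a_anti hab (ltW rt)).
exact: coS_le_trans (coS_meet_pc_meet _ _) (pc_ab' r s rs).2.
Qed.

Lemma Fbar_meet {a b a' b'} : hom_Rbar a b -> Fbar a' b' ->
  Fbar (fun r => coS_meet (a r) (a' r)) (fun r => coS_join (b r) (b' r)).
Proof.
move=> Rab Fab'; apply/Fbar_oppE.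
exact: Fbar_join (hom_Rbar_opp Rab) (Fbar_opp Fab').
Qed.

Lemma Fbar_pinf {c d} : Fbar c d -> (forall r, coS_le (d r) (@coS_zero L)) -> is_pinf c d.
Proof.
case=> hcd pc_cd d0; split=> r; last exact/coS_eq0.
apply/coS_eq1; first by auto.
apply: coS_le_trans coS_pc0 _; apply: coS_le_trans (pc_cd r (r + 1) _).2.
  exact: coS_pc_anti sublocale_zero (d0 (r + 1)).
by rewrite ltrDl.
Qed.

Lemma hom_minf {c d} : hom_IRbar c d -> (forall r, coS_le (@coS_one L) (d r)) -> is_minf c d.
Proof.
move=> hcd d1; split=> r; last by apply/coS_eq1; auto.
apply/coS_eq0; apply: coS_le_trans (hom_meet0 hcd (lexx r)).
apply: coS_meet_glb; auto.
exact: (coS_le_trans (coS_le1 (hom_sub_a hcd r)) (d1 r)).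
Qed.

Lemma pinf_of_Fjoin_pinf {a b a' b'} : hom_Rbar a b -> (forall r, is_closed (a r)) ->
  coS_eq (coS_bigmeet a) (@coS_zero L) ->
  Fbar a' b' -> Fjoin_is_pinf a b a' b' -> is_pinf a' b'.
Proof.
move=> Rab ca a0 Fab' join_pinf; have [hab _] := Rab; have [hab' _] := Fab'.
have [aa'1 _] := join_pinf _ _ (Fbar_join Rab Fab')
  (conj (fun r => coS_join_ubl _ _) (fun r => coS_meet_lbl _ _))
  (conj (fun r => coS_join_ubr _ _) (fun r => coS_meet_lbr _ _)).
have b'_a r t : r <= t -> coS_le (b' r) (a t).
  move=> rt; apply: coS_le_trans (closed_pcpc (ca t)).
  apply: coS_pc_max; auto; apply: coS_le_trans (coS_meetC _ _) _.
  have pca : coS_le (coS_pc (a t)) (a' t) by apply: coS_pc_le_complement; auto=> x /(aa'1 t).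
  exact: coS_le_trans (coS_meetS pca (coS_le_refl _)) (hom_meet0 hab' rt).
apply: (Fbar_pinf Fab') => r; apply: coS_le_trans (proj1 coS_eq0 a0).
apply: coS_bigmeet_glb; auto=> t; have [rt | tr] := leP r t; first exact: b'_a.
exact: coS_le_trans (b'_a r r (lexx r)) (hom_a_anti hab (ltW tr)).
Qed.

Lemma minf_of_Fmeet_minf {a b a' b'} : hom_Rbar a b ->
  coS_eq (coS_bigjoin (fun _ => True) a) (@coS_one L) ->
  Fbar a' b' -> Fmeet_is_minf a b a' b' -> is_minf a' b'.
Proof.
move=> Rab a1 Fab' meet_minf; have [hab _] := Rab; have [hab' _] := Fab'.
have [_ bb'1] := meet_minf _ _ (Fbar_meet Rab Fab')
  (conj (fun r => coS_meet_lbl _ _) (fun r => coS_join_ubl _ _))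
  (conj (fun r => coS_meet_lbr _ _) (fun r => coS_join_ubr _ _)).
have a_b' t r : r <= t -> coS_le (a t) (b' r).
  move=> rt; apply: coS_le_trans (coS_pc_max (hom_sub_a hab t) (hom_meet0 hab rt)) _.
  by apply: coS_pc_le_complement; auto=> x /(bb'1 r).
apply: (hom_minf hab') => r; apply: coS_le_trans (_ : coS_le _ (coS_bigjoin _ a)) _.
  by move=> x /a1.
apply: coS_bigjoin_lub => t _; have [rt | tr] := leP r t; first exact: a_b'.
exact: coS_le_trans (a_b' t t (lexx t)) (hom_b_mono hab' (ltW tr)).
Qed.

Lemma Freal_closed_bigjoin1 {a b} : Freal a b -> (forall r, is_closed (a r)) ->
  coS_eq (coS_bigjoin (fun _ => True) a) (@coS_one L).
Proof.
move=> [[_ pc_ab] real_ab] ca.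
pose P := coS_bigjoin (fun _ => True) a.
have cP : is_closed P := is_closed_bigjoin (fun r _ => ca r).
have sP := sublocale_is_closed cP.
have [_ meet_minf] := real_ab _ _ (Fbar_pc_const sP).
have [pcP0 _] : is_minf (fun _ => coS_pc P) (fun _ => coS_pc (coS_pc P)).
  apply: meet_minf => c d [hcd _] [_ bd] [_ pcpcP_d].
  apply: (hom_minf hcd) => s; have cas := ca (s - 1).
  apply: coS_le_trans (closed_join_pc cas) _; apply: coS_join_lub.
    apply: coS_le_trans (coS_bigjoin_ub a (I : True)) _.
    exact: (coS_le_trans (coS_le_pcpc sP) (pcpcP_d s)).
  apply: coS_le_trans (pc_ab (s - 1) s _).1 (bd s).
  by rewrite gtrDl oppr_lt0.
apply/coS_eq1 => //; apply: coS_le_trans (closed_join_pc cP) _.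
by move=> x Px; split=> //; apply/(pcP0 0).
Qed.

Lemma Freal_closed_bigmeet0 {a b} : Freal a b -> (forall r, is_closed (a r)) ->
  coS_eq (coS_bigmeet a) (@coS_zero L).
Proof.
move=> [[hab pc_ab] real_ab] ca.
set Q := coS_bigmeet a; have sQ : sublocale Q := sublocale_gen _.
have [join_pinf _] := real_ab _ _ (Fbar_pc_const sQ).
have [pcQ1 _] : is_pinf (fun _ => coS_pc Q) (fun _ => coS_pc (coS_pc Q)).
  apply: join_pinf => c d Fcd [_ db] [_ dpcpcQ].
  apply: (Fbar_pinf Fcd) => s; have [hcd _] := Fcd.
  have b_pca : coS_le (b s) (coS_pc (a s)).
    apply: coS_pc_max; auto; apply: coS_le_trans (coS_meetC _ _) _.
    exact: (hom_meet0 hab (lexx s)).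
  have pcpcQ_a : coS_le (coS_pc (coS_pc Q)) (a s).
    apply: coS_le_trans (closed_pcpc (ca s)).
    by apply: coS_pc_anti; auto; apply: coS_pc_anti; auto; apply: coS_bigmeet_lb.
  apply: coS_le_trans (coS_pc_meet (sublocale_is_closed (ca s))).
  apply: coS_meet_glb; auto.
    exact: (coS_le_trans (db s) b_pca).
  exact: (coS_le_trans (dpcpcQ s) pcpcQ_a).
have one_pcQ : coS_le (@coS_one L) (coS_pc Q) by move=> x /(pcQ1 0).
apply/coS_eq0; apply: coS_le_trans (coS_meet_pc sQ).
by apply: coS_meet_glb; auto; apply: coS_le_trans (coS_le1 sQ) one_pcQ.
Qed.

Lemma LSC_iff {a b} : LSC a b <-> Freal a b /\ LSCbar a b.
Proof.
split=> [[Rab [ca [a1 a0]]] | [Rf [Rab ca]]].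
  do 2!split=> //; first exact: hom_Rbar_Fbar.
  by move=> a' b' Fab'; split; [apply: pinf_of_Fjoin_pinf | apply: minf_of_Fmeet_minf].
by do 3!split=> //; [exact: (Freal_closed_bigjoin1 Rf) | exact: (Freal_closed_bigmeet0 Rf)].
Qed.

End SemicontinuousSublocaleMaps.

Theorem proposition5p5 (L : frame) :
  (forall a b : rat -> lset L, LSC a b <-> Freal a b /\ LSCbar a b) /\
  (forall a b : rat -> lset L, USC a b <-> Freal a b /\ USCbar a b).
Proof.
split=> a b; first exact: LSC_iff.
by rewrite USC_LSC_opp LSC_iff Freal_oppE -USCbar_LSCbar_opp.
Qed.
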